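(* Let $H \subset L$ be light-cone regular, $h \in H$ and $h_0 \in H_0$. If $h_0 \le h$ does not hold, then $f_h$ does not depend on the initial variable $f_{h_0}$. Equivalently, if $f_h$ depends on $f_{h_0}$, then $h_0 \le h$.
   Context: Let $R$ be a unique factorization domain with field of fractions $K$. Let $L$ be a finitely generated $\mathbb{Z}$-module, $v_1,\dots,v_N\in L$ distinct elements linearly independent over $\mathbb{Z}_{\ge 0}$ (i.e. $\sum_i a_i v_i=0$ with all $a_i\in\mathbb{Z}_{\ge0}$ forces all $a_i=0$), and $\Phi\in R[Y_1^{\pm1},\dots,Y_N^{\pm1}]$ a Laurent polynomial. Consider the equation $f_h=\Phi(f_{h+v_1},\dots,f_{h+v_N})$ ($h\in L$). Let $S=\{\sum_i a_iv_i : a_i\in\mathbb{Z}_{\ge0}\}$ and define the partial order $h_1\le h_2$ iff $h_1-h_2\in S$. A nonempty subset $H\subset L$ is light-cone regular if for every $h\in H$ the set $\{h'\in H: h'\le h\}$ is finite and $\{h'\in L: h'\ge h\}\subset H$; its initial boundary is $H_0=\{h\in H:\ h+v_i\notin H\text{ for some }i\}$. The $f_{h}$ ($h\in H_0$) are algebraically independent indeterminates over $K$ (initial variables), and for $h\in H\setminus H_0$ the value $f_h$ is defined recursively by the equation as an element of the rational function field $K(f_{h_0}: h_0\in H_0)$. ''$f_h$ does not depend on $f_{h_0}$'' means $f_h$ lies in the subfield generated over $K$ by the initial variables other than $f_{h_0}$. *)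

From HB Require Import structures.
From mathcomp Require Import all_boot all_order all_algebra.
From mathcomp Require Import fraction mpoly.
Set Implicit Arguments. Unset Strict Implicit. Unset Printing Implicit Defensive.
Import GRing.Theory.
Local Open Scope ring_scope.

Definition dvdr_elt (R : idomainType) (a b : R) : Prop := exists c, b = a * c.

Definition irreducible_elt (R : idomainType) (a : R) : Prop :=
  [/\ a != 0, a \isn't a GRing.unit &
      forall b c : R, a = b * c -> b \is a GRing.unit \/ c \is a GRing.unit].

Definition prime_elt (R : idomainType) (p : R) : Prop :=
  [/\ p != 0, p \isn't a GRing.unit &
      forall a b : R, dvdr_elt p (a * b) -> dvdr_elt p a \/ dvdr_elt p b].

Definition is_ufd (R : idomainType) : Prop :=
  (forall a : R, a != 0 -> a \isn't a GRing.unit ->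
     exists s : seq R, s != [::] /\ (forall p, p \in s -> irreducible_elt p)
                       /\ a = \prod_(p <- s) p)
  /\ (forall p : R, irreducible_elt p -> prime_elt p).

Definition fg_zmod (L : zmodType) : Prop :=
  exists s : seq L, forall x : L, exists c : seq int,
    size c = size s /\ x = \sum_(i < size s) s`_i *~ c`_i.

Section Cone.
Variables (L : zmodType) (N : nat) (v : 'I_N -> L).

Definition nonneg_indep : Prop :=
  forall a : 'I_N -> nat, \sum_i v i *+ a i = 0 -> forall i, a i = 0%N.

Definition inS (d : L) : Prop := exists a : 'I_N -> nat, d = \sum_i v i *+ a i.

Definition cone_le (h1 h2 : L) : Prop := inS (h1 - h2).

Definition light_cone_regular (H : L -> Prop) : Prop :=
  (exists h, H h) /\
  forall h, H h ->
    (exists s : seq L, forall h', H h' -> cone_le h' h -> h' \in s) /\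
    (forall h', cone_le h h' -> H h').

Definition initial_boundary (H : L -> Prop) (h : L) : Prop :=
  H h /\ exists i, ~ H (h + v i).
End Cone.

(* ---------- Laurent polynomials R[Y_1^{+-1},...,Y_N^{+-1}] ----------
   A Laurent polynomial is represented as P * (Y_1 ... Y_N)^{-d} with
   P a polynomial, i.e. R[Y^{+-1}] = R[Y][(Y_1...Y_N)^{-1}]. *)
Definition laurent (R : nzRingType) (N : nat) := ({mpoly R[N]} * nat)%type.

Definition laurent_eval (R : nzRingType) (F : fieldType) (phi : R -> F) (N : nat)
    (P : laurent R N) (y : 'I_N -> F) : F :=
  (map_mpoly phi P.1).@[y] / (\prod_i y i) ^+ P.2.

Section Fields.
Variables (K F : fieldType) (iota : K -> F) (I : eqType).

Definition alg_indep (P : I -> Prop) (x : I -> F) : Prop :=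
  forall n (hs : n.-tuple I), uniq hs -> (forall j, P (tnth hs j)) ->
  forall p : {mpoly K[n]},
    (map_mpoly iota p).@[fun j => x (tnth hs j)] = 0 -> p = 0.

Definition in_gen_field (P : I -> Prop) (x : I -> F) (y : F) : Prop :=
  exists n (hs : n.-tuple I) (p q : {mpoly K[n]}),
    [/\ forall j, P (tnth hs j),
        (map_mpoly iota q).@[fun j => x (tnth hs j)] != 0 &
        y = (map_mpoly iota p).@[fun j => x (tnth hs j)]
            / (map_mpoly iota q).@[fun j => x (tnth hs j)]].
End Fields.

From HB Require Import structures.
From mathcomp Require Import all_boot all_order all_algebra.
From mathcomp Require Import fraction mpoly.
From Stdlib Require Import Classical.
Set Implicit Arguments. Unset Strict Implicit. Unset Printing Implicit Defensive.
Local Open Scope ring_scope.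
Import GRing.Theory.

(* The elements of F that are rational functions of the f_{h'}, h' in
   H_0 \ {h0}, form a subfield containing K; the recursion step Phi keeps
   values inside any such subfield.  By induction along the finite lower set
   of h, every f_h with not (h0 <= h) lies in it: either h is itself an
   initial variable other than f_{h0}, or f_h = Phi(f_{h + v_i}) and no
   h + v_i lies above h0, since h + v_i <= h. *)

Section GeneratedField.
Variables (K F : fieldType) (iota : {rmorphism K -> F}) (I : eqType)
  (P : I -> Prop) (x : I -> F).

Definition iota_eval n (p : {mpoly K[n]}) (w : 'I_n -> F) := (map_mpoly iota p).@[w].

Lemma iota_evalD n (p q : {mpoly K[n]}) w :
  iota_eval (p + q) w = iota_eval p w + iota_eval q w.
Proof. by rewrite /iota_eval rmorphD mevalD. Qed.

Lemma iota_evalM n (p q : {mpoly K[n]}) w :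
  iota_eval (p * q) w = iota_eval p w * iota_eval q w.
Proof. by rewrite /iota_eval rmorphM mevalM. Qed.

Lemma iota_evalC n c w : iota_eval (c%:MP : {mpoly K[n]}) w = iota c.
Proof. by rewrite /iota_eval map_mpolyC mevalC. Qed.

Lemma iota_eval1 n w : iota_eval (1 : {mpoly K[n]}) w = 1.
Proof. by rewrite /iota_eval rmorph1 meval1. Qed.

Lemma iota_evalX n (i : 'I_n) w : iota_eval 'X_i w = w i.
Proof. by rewrite /iota_eval map_mpolyX mevalXU. Qed.

Lemma iota_eval_comp n k (p : {mpoly K[n]}) (lq : n.-tuple {mpoly K[k]}) w :
  iota_eval (p \mPo lq) w = iota_eval p (fun i => iota_eval (tnth lq i) w).
Proof.
rewrite /iota_eval map_mpoly_comp; last exact: fmorph_inj.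
by rewrite comp_mpoly_meval; apply: meval_eq => i; rewrite tnth_map.
Qed.

Definition values_at n (hs : n.-tuple I) : 'I_n -> F := fun j => x (tnth hs j).

Definition rational_in n (hs : n.-tuple I) (y : F) : Prop :=
  exists p q : {mpoly K[n]},
    iota_eval q (values_at hs) != 0 /\
    y = iota_eval p (values_at hs) / iota_eval q (values_at hs).

Lemma in_gen_fieldP y :
  in_gen_field iota P x y <->
  exists n (hs : n.-tuple I), (forall j, P (tnth hs j)) /\ rational_in hs y.
Proof.
split=> [[n [hs [p [q [Phs q0 ->]]]]] | [n [hs [Phs [p [q [q0 ->]]]]]]].
  by exists n, hs; split=> //; exists p, q.
by exists n, hs, p, q.
Qed.

Lemma rational_in_reindex n m (hs : n.-tuple I) (ks : m.-tuple I)
    (sigma : 'I_n -> 'I_m) y :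
  (forall j, tnth ks (sigma j) = tnth hs j) ->
  rational_in hs y -> rational_in ks y.
Proof.
move=> eq_ks [p [q [q0 ->]]].
pose lq := [tuple ('X_(sigma j) : {mpoly K[m]}) | j < n].
have eval_lq r : iota_eval (r \mPo lq) (values_at ks) = iota_eval r (values_at hs).
  rewrite iota_eval_comp; apply: meval_eq => j.
  by rewrite tnth_mktuple iota_evalX /values_at eq_ks.
by exists (p \mPo lq), (q \mPo lq); rewrite !eval_lq.
Qed.

Lemma rational_in_var n (hs : n.-tuple I) j : rational_in hs (x (tnth hs j)).
Proof.
by exists 'X_j, 1; rewrite iota_eval1 iota_evalX divr1 oner_neq0.
Qed.

Lemma rational_in_iota n (hs : n.-tuple I) c : rational_in hs (iota c).
Proof.
by exists c%:MP, 1; rewrite iota_eval1 iota_evalC divr1 oner_neq0.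
Qed.

Lemma rational_inD n (hs : n.-tuple I) y z :
  rational_in hs y -> rational_in hs z -> rational_in hs (y + z).
Proof.
move=> [p1 [q1 [q10 ->]]] [p2 [q2 [q20 ->]]].
exists (p1 * q2 + p2 * q1), (q1 * q2).
by rewrite !iota_evalD !iota_evalM mulf_neq0 // addf_div.
Qed.

Lemma rational_inM n (hs : n.-tuple I) y z :
  rational_in hs y -> rational_in hs z -> rational_in hs (y * z).
Proof.
move=> [p1 [q1 [q10 ->]]] [p2 [q2 [q20 ->]]].
exists (p1 * p2), (q1 * q2).
by rewrite !iota_evalM mulf_neq0 // mulf_div.
Qed.

Lemma rational_inV n (hs : n.-tuple I) y : rational_in hs y -> rational_in hs y^-1.
Proof.
move=> [p [q [q0 ->]]].
have [p0 | p0] := eqVneq (iota_eval p (values_at hs)) 0.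
  by rewrite p0 mul0r invr0 -(rmorph0 iota); apply: rational_in_iota.
by exists q, p; rewrite invf_div.
Qed.

Local Notation gen := (in_gen_field iota P x).

Lemma in_gen_field_var i : P i -> gen (x i).
Proof.
move=> Pi; apply/in_gen_fieldP; exists 1%N, [tuple i]; split.
  by move=> j; rewrite (ord1 j) tnth0.
exact: (rational_in_var [tuple i] ord0).
Qed.

Lemma in_gen_field_iota c : gen (iota c).
Proof.
apply/in_gen_fieldP; exists 0%N, [tuple]; split; last exact: rational_in_iota.
by case.
Qed.

Lemma in_gen_field_common_tuple y z : gen y -> gen z ->
  exists n (hs : n.-tuple I),
    [/\ forall j, P (tnth hs j), rational_in hs y & rational_in hs z].
Proof.
move=> /in_gen_fieldP [n1 [hs1 [P1 ry]]] /in_gen_fieldP [n2 [hs2 [P2 rz]]].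
exists (n1 + n2)%N, [tuple of hs1 ++ hs2]; split.
- by move=> j; rewrite -(splitK j); case: split => k; rewrite ?tnth_lshift ?tnth_rshift.
- by apply: rational_in_reindex ry => j; apply: tnth_lshift.
- by apply: rational_in_reindex rz => j; apply: tnth_rshift.
Qed.

Lemma in_gen_fieldD y z : gen y -> gen z -> gen (y + z).
Proof.
move=> gy gz; have [n [hs [Phs ry rz]]] := in_gen_field_common_tuple gy gz.
by apply/in_gen_fieldP; exists n, hs; split=> //; apply: rational_inD.
Qed.

Lemma in_gen_fieldM y z : gen y -> gen z -> gen (y * z).
Proof.
move=> gy gz; have [n [hs [Phs ry rz]]] := in_gen_field_common_tuple gy gz.
by apply/in_gen_fieldP; exists n, hs; split=> //; apply: rational_inM.
Qed.

Lemma in_gen_fieldV y : gen y -> gen y^-1.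
Proof.
move=> /in_gen_fieldP [n [hs [Phs ry]]].
by apply/in_gen_fieldP; exists n, hs; split=> //; apply: rational_inV.
Qed.

Lemma in_gen_field_prod k (y : 'I_k -> F) : (forall i, gen (y i)) -> gen (\prod_i y i).
Proof.
move=> gy; apply: (big_ind gen) => //; last exact: in_gen_fieldM.
by rewrite -(rmorph1 iota); apply: in_gen_field_iota.
Qed.

Lemma in_gen_fieldX y k : gen y -> gen (y ^+ k).
Proof.
by move=> gy; rewrite -[k]card_ord -prodr_const; apply: in_gen_field_prod.
Qed.

Lemma in_gen_field_meval (S : comNzRingType) k (phi : {rmorphism S -> F})
    (Q : {mpoly S[k]}) (y : 'I_k -> F) :
  (forall c, gen (phi c)) -> (forall i, gen (y i)) -> gen ((map_mpoly phi Q).@[y]).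
Proof.
move=> gphi gy; elim/mpolyind: Q => [|c m Q _ _ IH].
  by rewrite raddf0 meval0 -(rmorph0 iota); apply: in_gen_field_iota.
rewrite rmorphD /= map_mpolyZ map_mpolyX mevalD mevalZ mevalX.
apply: in_gen_fieldD => //; apply: in_gen_fieldM => //.
by apply: in_gen_field_prod => i; apply: in_gen_fieldX.
Qed.

End GeneratedField.

Lemma in_gen_field_laurent_eval (R : idomainType) (F : fieldType)
    (iota : {rmorphism {fraction R} -> F}) (I : eqType) (P : I -> Prop) (x : I -> F)
    N (Phi : laurent R N) (y : 'I_N -> F) :
  (forall i, in_gen_field iota P x (y i)) ->
  in_gen_field iota P x (laurent_eval (fun c : R => iota (@FracField.tofrac R c)) Phi y).
Proof.
move=> gy; apply: in_gen_fieldM.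
  by apply: (in_gen_field_meval (phi := iota \o @FracField.tofrac R)) => // c;
    apply: in_gen_field_iota.
by apply/in_gen_fieldV/in_gen_fieldX/in_gen_field_prod.
Qed.

Section Cone.
Variables (L : zmodType) (N : nat) (v : 'I_N -> L).

Lemma inS0 : inS v 0.
Proof. by exists (fun _ => 0%N); rewrite big1. Qed.

Lemma inSD a b : inS v a -> inS v b -> inS v (a + b).
Proof.
move=> [c ->] [d ->]; exists (fun i => c i + d i)%N.
by rewrite -big_split /=; apply: eq_bigr => i _; rewrite mulrnDr.
Qed.

Lemma inS_gen i : inS v (v i).
Proof.
exists (fun j => (j == i) : nat); rewrite (bigD1 i) //= eqxx big1 ?addr0 //.
by move=> j /negbTE ->.
Qed.

Lemma cone_le_refl a : cone_le v a a.
Proof. by rewrite /cone_le subrr; apply: inS0. Qed.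

Lemma cone_le_trans a b c : cone_le v a b -> cone_le v b c -> cone_le v a c.
Proof. by rewrite /cone_le => ab bc; rewrite -(subrKA b); apply: inSD. Qed.

Lemma cone_le_addr_gen a i : cone_le v (a + v i) a.
Proof. by rewrite /cone_le addrAC subrr add0r; apply: inS_gen. Qed.

Lemma cone_le_addr_gen_r a b i : cone_le v a (b + v i) -> cone_le v a b.
Proof. by move/cone_le_trans; apply; apply: cone_le_addr_gen. Qed.

(* Adding 1 to the i-th coefficient of a representation of -v_i gives a
   nontrivial representation of 0. *)
Lemma not_inS_opp_gen i : nonneg_indep v -> ~ inS v (- v i).
Proof.
move=> ind [a e].
suff /ind /(_ i) : \sum_j v j *+ (a j + (j == i))%N = 0 by rewrite eqxx addn1.
under eq_bigr => j _ do rewrite mulrnDr.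
rewrite big_split /= -e (bigD1 i) //= eqxx big1 ?addr0 ?addNr //.
by move=> j /negbTE ->.
Qed.

Lemma not_cone_le_addr_gen a i : nonneg_indep v -> ~ cone_le v a (a + v i).
Proof. by move=> ind; rewrite /cone_le opprD addNKr; apply: not_inS_opp_gen. Qed.

End Cone.

Section Propagation.
Variables (L : zmodType) (N : nat) (v : 'I_N -> L) (H : L -> Prop).
Variables (T : Type) (f : L -> T) (step : ('I_N -> T) -> T) (Q : T -> Prop) (h0 : L).
Hypothesis indep : nonneg_indep v.
Hypothesis f_rec : forall h, H h -> ~ initial_boundary v H h ->
  f h = step (fun i => f (h + v i)).
Hypothesis Q_step : forall y, (forall i, Q (y i)) -> Q (step y).
Hypothesis Q_boundary : forall h, initial_boundary v H h -> h <> h0 -> Q (f h).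

Definition covers_lower_set (s : seq L) (h : L) : Prop :=
  forall h', H h' -> cone_le v h' h -> h' \in s.

Lemma covers_lower_set_step s h i :
  covers_lower_set s h -> covers_lower_set (rem h s) (h + v i).
Proof.
move=> cov h' Hh' le_h'; apply: rem_mem; last first.
  by apply: cov => //; apply: cone_le_addr_gen_r le_h'.
by apply/eqP => eq_h'; move: le_h'; rewrite eq_h'; apply: not_cone_le_addr_gen.
Qed.

Lemma Q_f_not_above h s :
  H h -> covers_lower_set s h -> ~ cone_le v h0 h -> Q (f h).
Proof.
move: {2}(size s) (erefl (size s)) => n.
elim: n s h => [|n IH] s h size_s Hh cov nle.
  by move/eqP/nilP: size_s (cov h Hh (cone_le_refl v h)) => ->.
have [bd | nbd] := classic (initial_boundary v H h).
  by apply: Q_boundary => // eq_h; apply: nle; rewrite eq_h; apply: cone_le_refl.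
have Hsucc i : H (h + v i) by apply: NNPP => nH; apply: nbd; split=> //; exists i.
rewrite f_rec //; apply: Q_step => i.
apply: (IH (rem h s)) => //.
- by rewrite size_rem ?size_s //; apply: cov => //; apply: cone_le_refl.
- exact: covers_lower_set_step.
- by move/cone_le_addr_gen_r.
Qed.

End Propagation.

Theorem lemma3p3 (R : idomainType) (F : fieldType)
  (iota : {rmorphism {fraction R} -> F})
  (L : zmodType) (N : nat) (v : 'I_N -> L) (Phi : laurent R N)
  (H : L -> Prop) (f : L -> F) (h h0 : L) :
  is_ufd R -> fg_zmod L -> injective v -> nonneg_indep v ->
  light_cone_regular v H ->
  alg_indep iota (initial_boundary v H) f ->
  (forall y : F, in_gen_field iota (initial_boundary v H) f y) ->
  (forall h', H h' -> ~ initial_boundary v H h' ->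
     f h' = laurent_eval (fun c : R => iota (@FracField.tofrac R c)) Phi (fun i => f (h' + v i))) ->
  H h -> initial_boundary v H h0 -> ~ cone_le v h0 h ->
  in_gen_field iota (fun h' => initial_boundary v H h' /\ h' <> h0) f (f h).
Proof.
move=> _ _ _ indep [_ regular] _ _ f_rec Hh _ nle.
have [[s cov] _] := regular h Hh.
apply: (Q_f_not_above indep f_rec _ _ Hh cov nle) => [y gy | h' bd neq].
  exact: in_gen_field_laurent_eval.
exact: in_gen_field_var.
Qed.
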